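(* Let $s$ be a node and let $U$ be a nonempty set of neighbors of $s$ in the communication graph $G$ (the ''unexplored neighbors'' of $s$), and let $m=|U|$. Suppose procedure ESUN is run with $s$ as initiator, with only the nodes of $U$ transmitting during it. Then, for appropriately chosen constants $d$ and $\epsilon'$ in the procedure, the upper bound $x$ declared by $s$ satisfies $m\le x\le 16m$ with high probability.
   Context: Model: $n$ nodes in the Euclidean plane with unique names in $\{1,\dots,N\}$, $N\ge n$ ($N$ a power of 2); synchronous rounds, each node transmits or listens in each round, no collision detection. Uniform power $P$, parameters $\alpha>2$, $\mathcal{N}>0$, $\beta\ge1$, $\varepsilon\in(0,1)$, $r=(P/(\mathcal{N}\beta))^{1/\alpha}$. If set $\mathcal{T}$ transmits, $u\notin\mathcal{T}$ receives the message of $v\in\mathcal{T}$ iff $\frac{P\,\mathrm{dist}(v,u)^{-\alpha}}{\mathcal{N}+\sum_{w\in\mathcal{T}\setminus\{v\}}P\,\mathrm{dist}(w,u)^{-\alpha}}\ge\beta$ and $\mathrm{dist}(v,u)\le(1-\varepsilon)r$. Communication graph $G$: $u,v$ adjacent iff $\mathrm{dist}(u,v)\le(1-\varepsilon)r$. Procedure ESUN (Estimate the Size of the Unexplored Neighborhood), initiated by $s$: Stage 1 consists of $\log N$ sub-stages; in sub-stage $i$ ($i=1,\dots,\log N$), for $d\log N$ rounds, each node of $U$ independently transmits in each round with probability $1/2^i$, while $s$ listens; let $n_i$ be the number of rounds of sub-stage $i$ in which $s$ successfully receives a message. Stage 2: let $k$ be the largest $i$ with $n_i\ge \frac{d\log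 N}{8}(1-\epsilon')$; $s$ declares $x=2^k$ as an upper bound on the size of its unexplored neighborhood. ''With high probability'' means with probability at least $1-n^{-d''}$ for a sufficiently large constant $d''\ge1$. *)

From HB Require Import structures.
From mathcomp Require Import all_boot all_order all_algebra.
From mathcomp Require Import reals exp.
Set Implicit Arguments. Unset Strict Implicit. Unset Printing Implicit Defensive.
Import Order.TTheory GRing.Theory Num.Theory.
Local Open Scope ring_scope.

Definition dist (R : realType) (p q : R * R) : R :=
  Num.sqrt ((p.1 - q.1) ^+ 2 + (p.2 - q.2) ^+ 2).

Definition srange (R : realType) (alpha beta noise P : R) : R :=
  (P / (noise * beta)) `^ alpha^-1.

Definition sinr_receives (R : realType) (alpha beta noise P eps : R) (n : nat)
    (pos : 'I_n -> R * R) (T : {set 'I_n}) (v u : 'I_n) : bool :=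
  [&& v \in T, u \notin T,
      dist (pos v) (pos u) <= (1 - eps) * srange alpha beta noise P &
      beta <= (P * dist (pos v) (pos u) `^ (- alpha)) /
              (noise + \sum_(w in T | w != v) P * dist (pos w) (pos u) `^ (- alpha))].

Definition receives_some (R : realType) (alpha beta noise P eps : R) (n : nat)
    (pos : 'I_n -> R * R) (T : {set 'I_n}) (u : 'I_n) : bool :=
  [exists v, sinr_receives alpha beta noise P eps pos T v u].

Definition adjacent (R : realType) (alpha beta noise P eps : R) (n : nat)
    (pos : 'I_n -> R * R) (u v : 'I_n) : bool :=
  (u != v) && (dist (pos u) (pos v) <= (1 - eps) * srange alpha beta noise P).

(* Probability that exactly the set T transmits in one round, when every node of U
   transmits independently with probability p and nodes outside U never transmit. *)
Definition round_weight (R : realType) (n : nat) (U : {set 'I_n}) (p : R)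
    (T : {set 'I_n}) : R :=
  \prod_(v : 'I_n)
     (if v \in U then (if v \in T then p else 1 - p)
      else (if v \in T then 0 else 1)).

(* An execution of Stage 1 of ESUN: for sub-stage i (0-based index, i.e. sub-stage i+1)
   and round j, the set of transmitting nodes. *)
Definition esun_exec (n lN rounds : nat) :=
  {ffun 'I_lN * 'I_rounds -> {set 'I_n}}.

Definition esun_weight (R : realType) (n lN rounds : nat) (U : {set 'I_n})
    (w : esun_exec n lN rounds) : R :=
  \prod_(ij : 'I_lN * 'I_rounds) round_weight U ((2%:R ^+ ij.1.+1)^-1) (w ij).

Definition esun_count (R : realType) (alpha beta noise P eps : R) (n lN rounds : nat)
    (pos : 'I_n -> R * R) (s : 'I_n) (w : esun_exec n lN rounds) (i : 'I_lN) : nat :=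
  #|[set j : 'I_rounds | receives_some alpha beta noise P eps pos (w (i, j)) s]|.

(* k = the largest sub-stage index (1..log N) with n_k >= (d log N / 8)(1 - eps');
   by convention k = 0 if there is none. rounds = d * log N. *)
Definition esun_k (R : realType) (alpha beta noise P eps eps' : R) (n lN d : nat)
    (pos : 'I_n -> R * R) (s : 'I_n) (w : esun_exec n lN (d * lN)) : nat :=
  \max_(i < lN | (d * lN)%:R / 8 * (1 - eps') <=
                 (esun_count alpha beta noise P eps pos s w i)%:R :> R) i.+1.

Definition esun_x (R : realType) (alpha beta noise P eps eps' : R) (n lN d : nat)
    (pos : 'I_n -> R * R) (s : 'I_n) (w : esun_exec n lN (d * lN)) : nat :=
  2 ^ esun_k alpha beta noise P eps eps' pos s w.

From Pilot Require Import Defs.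
From HB Require Import structures.
From mathcomp Require Import all_boot all_order all_algebra.
From mathcomp Require Import reals exp.
From mathcomp Require sequences.
From mathcomp Require Import ring lra zify.
Set Implicit Arguments. Unset Strict Implicit. Unset Printing Implicit Defensive.
Import Order.TTheory GRing.Theory Num.Theory.
Local Open Scope ring_scope.

(* In sub-stage i + 1 every node of U transmits with probability p = 2^-(i+1),
   and s hears a message in a given round with a probability q_i such that
   m p (1 - p)^(m-1) <= q_i <= m p: a lone transmitter adjacent to s is always
   heard, and nothing is heard if nobody transmits. Hence q_i >= 4/27 for the
   sub-stage with m <= 2^(i+1) <= 2m, and q_i <= 1/16 once 2^(i+1) > 16m.
   For d = 12 d0 and eps' = 1/3 the threshold is K = d0 log N out of 12 K
   rounds. The rounds are independent, so E[c^n_i] = (1 + (c - 1) q_i)^(12 K),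
   and Markov's inequality with c = 1/2, resp. c = 3/2, bounds the probability
   that n_i < K in the first sub-stage, resp. n_i >= K in the late ones, by
   0.97^K. Outside these log N + 1 events m <= 2^k <= 16m, and d0 is chosen
   so that (log N + 1) 0.97^(d0 log N) <= n^-d''. *)

(* Importing [sequences] would shadow [adjacent] from Defs. *)
Local Notation expR := sequences.expR.

Lemma sum_set_prod_mem (T : finType) (R : comNzRingType) (F : T -> bool -> R) :
  \sum_(A : {set T}) \prod_(x : T) F x (x \in A) = \prod_(x : T) (F x true + F x false).
Proof.
under [RHS]eq_bigr do rewrite -big_bool.
rewrite bigA_distr_bigA (reindex (fun f : {ffun T -> bool} => [set x | f x])) /=.
  by apply: eq_bigr => f _; apply: eq_bigr => x _; rewrite inE.
exists (fun A : {set T} => [ffun x => x \in A]) => [f _ | A _].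
  by apply/ffunP => x; rewrite ffunE inE.
by apply/setP => x; rewrite inE ffunE.
Qed.

Lemma sum_union_bound (I T : finType) (R : numDomainType) (f : T -> R)
    (P : pred T) (Q : I -> pred T) :
  (forall x, 0 <= f x) -> (forall x, P x -> exists i, Q i x) ->
  \sum_(x | P x) f x <= \sum_i \sum_(x | Q i x) f x.
Proof.
move=> f_ge0 PQ; rewrite (exchange_big_dep xpredT) //= [X in _ <= X](bigID P) /=.
rewrite -[X in X <= _]addr0; apply: lerD; last first.
  by apply: sumr_ge0 => x _; apply: sumr_ge0.
apply: ler_sum => x Px; have [i Qix] := PQ x Px.
by rewrite (bigD1 i) //= lerDl sumr_ge0.
Qed.

Lemma sum_markov (T : finType) (R : realFieldType) (f X : T -> R) (P : pred T) (a : R) :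
  0 < a -> (forall x, 0 <= f x) -> (forall x, 0 <= X x) -> (forall x, P x -> a <= X x) ->
  \sum_(x | P x) f x <= (\sum_x f x * X x) / a.
Proof.
move=> a_gt0 f_ge0 X_ge0 PX; rewrite ler_pdivlMr // mulr_suml big_mkcond /=.
apply: ler_sum => x _; case: ifP => [Px | _]; last exact: mulr_ge0.
by rewrite ler_wpM2l // PX.
Qed.

Lemma prod_pair_fst_eq (I J : finType) (R : comNzRingType) (i : I) (f : J -> R) :
  \prod_(ij : I * J) (if ij.1 == i then f ij.2 else 1) = \prod_(j : J) f j.
Proof.
rewrite -(pair_big xpredT xpredT (fun i' j => if i' == i then f j else 1)) /=.
rewrite (bigD1 i) //= eqxx [X in _ * X]big1 ?mulr1 // => i' /negbTE i'i.
by rewrite big1 // => j _; rewrite i'i.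
Qed.

Lemma bernoulli_ineq (R : realDomainType) (x : R) k :
  -1 <= x -> 1 + k%:R * x <= (1 + x) ^+ k.
Proof.
move=> x_ge; elim: k => [|k IH]; first by rewrite mul0r addr0 expr0.
rewrite exprS -natr1; have x1_ge0 : 0 <= 1 + x by lra.
apply: le_trans (ler_wpM2l x1_ge0 IH).
have : 0 <= k%:R * (x * x) by rewrite mulr_ge0 ?sqr_ge0.
nra.
Qed.

Lemma exists_expr_mul_le1 (R : archiRealFieldType) (a B : R) :
  0 < a < 1 -> exists k : nat, (0 < k)%N /\ a ^+ k * B <= 1.
Proof.
case/andP => a_gt0 a_lt1; set x := a^-1 - 1.
have x_gt0 : 0 < x by rewrite subr_gt0 invf_gt1.
exists (Num.truncn (B / x)).+1; split => //; set k := (Num.truncn _).+1.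
have B_lt : B < k%:R * x by rewrite -ltr_pdivrMr // truncnS_gt.
have B_le : B <= a^-1 ^+ k.
  rewrite -[a^-1](subrK 1) -/x addrC.
  by apply: le_trans (bernoulli_ineq k _); lra.
apply: le_trans (ler_wpM2l (exprn_ge0 k (ltW a_gt0)) B_le) _.
by rewrite exprVn mulfV // expf_neq0 // gt_eqF.
Qed.

Lemma expRN1_ge (R : realType) : 8 / 27 <= expR (-1 : R).
Proof.
have -> : (-1 : R) = 3%:R * (- 3^-1) by field.
have -> : (8 / 27 : R) = (2 / 3) ^+ 3 by field.
rewrite expRM_natl; apply: lerXn2r; rewrite ?nnegrE ?expR_ge0 //; first lra.
by apply: le_trans (expR_ge1Dx _); lra.
Qed.

Lemma expRN_le_1Bx (R : realType) (x : R) :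
  0 <= x < 1 -> expR (- (x / (1 - x))) <= 1 - x.
Proof.
case/andP => x_ge0 x_lt1; have x1_gt0 : 0 < 1 - x by lra.
have e_ge := expR_ge1Dx (x / (1 - x)).
have inv_eq : 1 + x / (1 - x) = (1 - x)^-1 by field; lra.
rewrite inv_eq in e_ge.
by rewrite expRN -[X in _ <= X]invrK lef_pV2 ?posrE ?expR_gt0 ?invr_gt0.
Qed.

Lemma exactly_one_success_ge (R : realType) (m : nat) (p : R) :
  (0 < m)%N -> 0 <= p <= 1 / 2 -> 1 / 2 <= m%:R * p <= 1 ->
  4 / 27 <= m%:R * (p * (1 - p) ^+ (m - 1)).
Proof.
move=> m_gt0 /andP[p_ge0 p_le] /andP[mp_ge mp_le].
have p1_gt0 : 0 < 1 - p by lra.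
have e_le : expR (-1) <= (1 - p) ^+ (m - 1).
  apply: (@le_trans _ _ (expR (- (p / (1 - p))) ^+ (m - 1))); last first.
    by rewrite lerXn2r ?nnegrE ?expR_ge0 ?expRN_le_1Bx //; lra.
  rewrite -expRM_natl ler_expR natrB // mulrN lerN2 mulrA ler_pdivrMr // mul1r.
  lra.
have e_ge := expRN1_ge R; rewrite mulrA.
apply: (@le_trans _ _ (1 / 2 * expR (-1))); first lra.
by apply: ler_pM => //; [lra | apply: expR_ge0].
Qed.

Lemma exprM_div_le (R : realFieldType) (E a b c : R) r K :
  0 < c -> 0 <= E <= a -> a ^+ r / c <= b -> E ^+ (r * K) / c ^+ K <= b ^+ K.
Proof.
move=> c_gt0 /andP[E_ge0 E_le] ab.
have Eb : E ^+ r / c <= b.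
  by apply: le_trans ab; rewrite ler_pM2r ?invr_gt0 // lerXn2r ?nnegrE // (le_trans E_ge0).
rewrite exprM -expr_div_n lerXn2r ?nnegrE ?divr_ge0 ?exprn_ge0 ?(ltW c_gt0) //.
exact: le_trans (divr_ge0 (exprn_ge0 r E_ge0) (ltW c_gt0)) Eb.
Qed.

Lemma exists_pow2_bracket m k :
  (0 < m)%N -> (m <= 2 ^ k)%N -> (0 < k)%N -> exists i : 'I_k, (m <= 2 ^ i.+1 <= 2 * m)%N.
Proof.
move=> m_gt0 m_le k_gt0.
have ex_i : exists i, (m <= 2 ^ i.+1)%N by exists k.-1; rewrite prednK.
case: (ex_minnP ex_i) => i m_le_i i_min.
have i_lt : (i < k)%N by rewrite -(prednK k_gt0) ltnS i_min // prednK.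
exists (Ordinal i_lt); rewrite /= m_le_i /=.
case: i {i_lt} m_le_i i_min => [|i] _ i_min; first by rewrite expn1 leq_pmulr.
have m_gt : (2 ^ i.+1 < m)%N by rewrite ltnNge; apply/negP => /i_min; rewrite ltnn.
by rewrite expnS leq_mul2l ltnW.
Qed.

Lemma natrS_mul_exprM_le_powRN (R : realType) (a e : R) n k d0 :
  0 <= a -> 0 <= e -> (0 < n)%N -> (n <= 2 ^ k)%N -> a ^+ d0 * (2 * 2 `^ e) <= 1 ->
  k.+1%:R * a ^+ (d0 * k) <= n%:R `^ (- e).
Proof.
move=> a_ge0 e_ge0 n_gt0 n_le small.
have two_e_gt0 : (0 : R) < 2 `^ e by apply: powR_gt0.
have k1_le : (k.+1%:R : R) <= 2 ^+ k by rewrite -natrX ler_nat ltn_expl.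
have npow_le : n%:R `^ e <= (2 `^ e) ^+ k.
  rewrite -powR_mulrn ?powR_ge0 // -powRrM mulrC powRrM powR_mulrn //.
  by rewrite ge0_ler_powR ?nnegrE ?exprn_ge0 // -natrX ler_nat.
have base_le : 2 * a ^+ d0 <= (2 `^ e)^-1.
  rewrite -[_^-1]mul1r ler_pdivlMr //.
  by have -> : 2 * a ^+ d0 * 2 `^ e = a ^+ d0 * (2 * 2 `^ e) by ring.
apply: (@le_trans _ _ ((2 * a ^+ d0) ^+ k)).
  by rewrite exprMn exprM ler_wpM2r ?exprn_ge0.
apply: (@le_trans _ _ ((2 `^ e)^-1 ^+ k)).
  by apply: lerXn2r; rewrite ?nnegrE ?mulr_ge0 ?exprn_ge0 ?invr_ge0 ?powR_ge0.
by rewrite powRN exprVn lef_pV2 ?posrE ?exprn_gt0 ?powR_gt0 ?ltr0n.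
Qed.

Section RoundWeight.
Variables (R : realType) (n : nat) (U : {set 'I_n}) (p : R).

Let coin (v : 'I_n) (b : bool) : R :=
  if v \in U then (if b then p else 1 - p) else (if b then 0 else 1).

Lemma sum_round_weight : \sum_(T : {set 'I_n}) round_weight U p T = 1.
Proof.
rewrite (sum_set_prod_mem coin) big1 // => v _.
by rewrite /coin; case: (v \in U); rewrite ?add0r // addrC subrK.
Qed.

Lemma sum_round_weight_mem v :
  \sum_(T : {set 'I_n}) round_weight U p T * (v \in T)%:R = (v \in U)%:R * p.
Proof.
pose F u b := coin u b * (if u == v then b%:R else 1).
transitivity (\sum_(T : {set 'I_n}) \prod_u F u (u \in T)).
  apply: eq_bigr => T _; rewrite big_split /=; congr (_ * _).
  by rewrite -big_mkcond /= big_pred1_eq.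
rewrite sum_set_prod_mem (bigD1 v) //= big1 => [|u /negbTE uv].
  by rewrite /F /coin eqxx mulr1 mulr0 addr0 mulr1; case: (v \in U); rewrite ?mul1r ?mul0r.
by rewrite /F /coin uv !mulr1; case: (u \in U); rewrite ?add0r // addrC subrK.
Qed.

Lemma round_weight_set1 v :
  v \in U -> round_weight U p [set v] = p * (1 - p) ^+ (#|U| - 1).
Proof.
move=> vU; rewrite /round_weight (bigD1 v) //= vU set11; congr (_ * _).
rewrite (bigID (mem U)) /= [X in _ * X]big1 ?mulr1 => [|u /andP[uv /negbTE ->]]; last first.
  by rewrite inE (negbTE uv).
rewrite (eq_bigr (fun _ => 1 - p)) => [|u /andP[uv ->]]; last by rewrite inE (negbTE uv).
rewrite prodr_const (cardsD1 v U) vU add1n subn1 /=; congr (_ ^+ _).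
by apply: eq_card => u; rewrite !inE.
Qed.

Lemma sum_round_weight_if (g : pred {set 'I_n}) (t : R) :
  \sum_(T : {set 'I_n}) round_weight U p T * (if g T then t else 1) =
  1 + (t - 1) * \sum_(T : {set 'I_n} | g T) round_weight U p T.
Proof.
rewrite mulr_sumr [X in _ = _ + X]big_mkcond -[X in _ = X + _]sum_round_weight -big_split /=.
by apply: eq_bigr => T _; case: (g T); rewrite ?mulr1 ?mulr0 ?addr0 //; ring.
Qed.

Hypothesis p01 : 0 <= p <= 1.

Lemma round_weight_ge0 T : 0 <= round_weight U p T.
Proof.
case/andP: p01 => p0 p1; apply: prodr_ge0 => v _.
by case: (v \in U); case: (v \in T); rewrite // subr_ge0.
Qed.

Lemma round_prob_le_card (g : pred {set 'I_n}) :
  (forall T, g T -> T != set0) ->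
  \sum_(T : {set 'I_n} | g T) round_weight U p T <= #|U|%:R * p.
Proof.
move=> g_nonempty.
apply: (@le_trans _ _ (\sum_T round_weight U p T * \sum_v (v \in T)%:R)).
  rewrite big_mkcond /=; apply: ler_sum => T _.
  have sum_ge0 : 0 <= \sum_v ((v \in T)%:R : R) by apply: sumr_ge0.
  case: ifP => gT; last exact: mulr_ge0 (round_weight_ge0 T) sum_ge0.
  rewrite -[X in X <= _]mulr1 ler_wpM2l ?round_weight_ge0 //.
  have [v vT] := set0Pn _ (g_nonempty T gT).
  by rewrite (bigD1 v) //= vT lerDl sumr_ge0.
under eq_bigr do rewrite mulr_sumr.
rewrite exchange_big /=; under eq_bigr do rewrite sum_round_weight_mem.
rewrite -mulr_suml -sum1_card natr_sum [X in _ <= X * _]big_mkcond /=.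
by rewrite ler_wpM2r //; [case/andP: p01 | apply: ler_sum => v _; case: (v \in U)].
Qed.

Lemma round_prob_ge_set1 (g : pred {set 'I_n}) :
  (forall v, v \in U -> g [set v]) ->
  #|U|%:R * (p * (1 - p) ^+ (#|U| - 1)) <= \sum_(T : {set 'I_n} | g T) round_weight U p T.
Proof.
move=> g_set1.
have -> : #|U|%:R * (p * (1 - p) ^+ (#|U| - 1)) = \sum_(v in U) round_weight U p [set v].
  by rewrite (eq_bigr _ round_weight_set1) sumr_const mulr_natl.
rewrite -(big_imset (fun T => round_weight U p T)) /=; last first.
  by move=> u v _ _; apply: set1_inj.
rewrite [X in X <= _]big_mkcond [X in _ <= X]big_mkcond /=; apply: ler_sum => T _.
case: ifP => [/imsetP[v vU ->] | _]; first by rewrite g_set1.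
by case: ifP => // _; apply: round_weight_ge0.
Qed.

End RoundWeight.

Definition stage_prob (R : realType) (i : nat) : R := (2%:R ^+ i.+1)^-1.

Lemma stage_prob_ge0 (R : realType) i : 0 <= stage_prob R i.
Proof. by rewrite invr_ge0 exprn_ge0. Qed.

Lemma stage_probK (R : realType) i : (2 ^ i.+1)%:R * stage_prob R i = 1.
Proof. by rewrite /stage_prob natrX mulfV // gt_eqF // exprn_gt0. Qed.

Lemma natr_stage_prob_le1 (R : realType) m i :
  (m <= 2 ^ i.+1)%N -> m%:R * stage_prob R i <= 1.
Proof.
by move=> m_le; rewrite -[X in _ <= X](stage_probK R i) ler_wpM2r ?ler_nat ?stage_prob_ge0.
Qed.

Lemma natr_stage_prob_ge1 (R : realType) m i :
  (2 ^ i.+1 <= m)%N -> 1 <= m%:R * stage_prob R i.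
Proof.
by move=> le_m; rewrite -[X in X <= _](stage_probK R i) ler_wpM2r ?ler_nat ?stage_prob_ge0.
Qed.

Lemma stage_prob_le_half (R : realType) i : stage_prob R i <= 1 / 2.
Proof.
have : (2 <= 2 ^ i.+1)%N by rewrite expnS leq_pmulr ?expn_gt0.
by move/(natr_stage_prob_le1 R); lra.
Qed.

Definition exec_count n lN M (g : pred {set 'I_n}) (w : esun_exec n lN M) (i : 'I_lN) : nat :=
  #|[set j : 'I_M | g (w (i, j))]|.

Section Executions.
Variables (R : realType) (n lN M : nat) (U : {set 'I_n}).

Lemma esun_weight_ge0 (w : esun_exec n lN M) : 0 <= esun_weight R U w.
Proof.
apply: prodr_ge0 => ij _; change (0 <= round_weight U (stage_prob R ij.1) (w ij)).
apply: round_weight_ge0; have := stage_prob_le_half R ij.1; have := stage_prob_ge0 R ij.1.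
lra.
Qed.

Lemma sum_esun_weight_prod (h : 'I_lN * 'I_M -> {set 'I_n} -> R) :
  \sum_(w : esun_exec n lN M) esun_weight R U w * \prod_(ij : 'I_lN * 'I_M) h ij (w ij) =
  \prod_(ij : 'I_lN * 'I_M) \sum_(T : {set 'I_n}) round_weight U (stage_prob R ij.1) T * h ij T.
Proof. by rewrite bigA_distr_bigA /=; apply: eq_bigr => w _; rewrite -big_split. Qed.

Lemma sum_esun_weight : \sum_(w : esun_exec n lN M) esun_weight R U w = 1.
Proof.
have := sum_esun_weight_prod (fun _ _ => 1); under eq_bigr do rewrite big1_eq mulr1.
by move=> ->; apply: big1 => ij _; under eq_bigr do rewrite mulr1; apply: sum_round_weight.
Qed.

Lemma sum_esun_weight_expr_count (g : pred {set 'I_n}) (i : 'I_lN) (c : R) :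
  \sum_(w : esun_exec n lN M) esun_weight R U w * c ^+ exec_count g w i =
  (1 + (c - 1) * \sum_(T : {set 'I_n} | g T) round_weight U (stage_prob R i) T) ^+ M.
Proof.
pose h (ij : 'I_lN * 'I_M) T := if ij.1 == i then (if g T then c else 1) else 1.
have count_prod w : c ^+ exec_count g w i = \prod_ij h ij (w ij).
  rewrite (eq_bigr (fun ij => if ij.1 == i then (if g (w (i, ij.2)) then c else 1) else 1)).
    rewrite (prod_pair_fst_eq i (fun j => if g (w (i, j)) then c else 1)).
    by rewrite -big_mkcond prodr_const; congr (_ ^+ _); apply: eq_card => j; rewrite inE.
  by move=> [i' j] _; rewrite /h /=; case: eqP => // ->.
under eq_bigr do rewrite count_prod.
rewrite sum_esun_weight_prod -sum_round_weight_if.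
set X := \sum_T _.
have -> : X ^+ M = \prod_(j : 'I_M) X by rewrite prodr_const card_ord.
rewrite -(prod_pair_fst_eq i (fun _ : 'I_M => X)).
apply: eq_bigr => -[i' j] _; rewrite /h /=; case: eqP => [-> // | _].
by under eq_bigr do rewrite mulr1; apply: sum_round_weight.
Qed.

Lemma esun_count_tail (g : pred {set 'I_n}) (i : 'I_lN) (c : R) (K : nat) (Q : pred nat) :
  0 < c -> (forall k, Q k -> c ^+ K <= c ^+ k) ->
  \sum_(w : esun_exec n lN M | Q (exec_count g w i)) esun_weight R U w <=
  (1 + (c - 1) * \sum_(T : {set 'I_n} | g T) round_weight U (stage_prob R i) T) ^+ M
  / c ^+ K.
Proof.
move=> c_gt0 QK; rewrite -sum_esun_weight_expr_count.
apply: sum_markov => [| w | w | w /QK //]; rewrite ?exprn_gt0 ?esun_weight_ge0 //.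
exact: exprn_ge0 (ltW c_gt0).
Qed.

End Executions.

Section CountTails.
Variables (R : realType) (n lN M K : nat) (U : {set 'I_n}) (g : pred {set 'I_n}).
Hypothesis rounds : M = (12 * K)%N.
Hypothesis g_nonempty : forall T, g T -> T != set0.
Hypothesis g_set1 : forall v, v \in U -> g [set v].

Lemma count_lt_tail (i : 'I_lN) : (#|U| <= 2 ^ i.+1 <= 2 * #|U|)%N ->
  \sum_(w : esun_exec n lN M | (exec_count g w i < K)%N) esun_weight R U w <= (97 / 100) ^+ K.
Proof.
case/andP => m_le le_2m; set p := stage_prob R i.
have m_gt0 : (0 < #|U|)%N by have := expn_gt0 2 i.+1; lia.
have p_le : p <= 1 / 2 := stage_prob_le_half R i.
have p_ge0 : 0 <= p := stage_prob_ge0 R i.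
have mp_le : #|U|%:R * p <= 1 by apply: natr_stage_prob_le1.
have mp_ge : 1 / 2 <= #|U|%:R * p.
  by have := natr_stage_prob_ge1 R le_2m; rewrite natrM -mulrA -/p; lra.
pose q := \sum_(T : {set 'I_n} | g T) round_weight U p T.
have p01 : 0 <= p <= 1 by lra.
have q_ge : 4 / 27 <= q.
  apply: le_trans (round_prob_ge_set1 p01 g_set1).
  by apply: exactly_one_success_ge; rewrite ?p_ge0 ?p_le ?mp_le ?mp_ge.
have q_le : q <= 1 := le_trans (round_prob_le_card U p01 g_nonempty) mp_le.
apply: le_trans (esun_count_tail M U g i (c := 1 / 2) (Q := fun k => (k < K)%N) _ _) _.
- lra.
- by move=> k /ltnW; apply: ler_wiXn2l; lra.
rewrite -/p -/q rounds; apply: (exprM_div_le (a := 25 / 27)); first lra.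
  by apply/andP; lra.
by rewrite !exprS expr0; lra.
Qed.

Lemma count_ge_tail (i : 'I_lN) : (16 * #|U| < 2 ^ i.+1)%N ->
  \sum_(w : esun_exec n lN M | (K <= exec_count g w i)%N) esun_weight R U w <= (97 / 100) ^+ K.
Proof.
move=> lt_2i; set p := stage_prob R i.
have p_ge0 : 0 <= p := stage_prob_ge0 R i.
have mp_le : (16 * #|U|)%:R * p <= 1 by apply/natr_stage_prob_le1/ltnW.
pose q := \sum_(T : {set 'I_n} | g T) round_weight U p T.
have p01 : 0 <= p <= 1 by have : p <= 1 / 2 := stage_prob_le_half R i; lra.
have q_ge0 : 0 <= q by apply: sumr_ge0 => T _; apply: round_weight_ge0.
have q_le : q <= 1 / 16.
  apply: le_trans (round_prob_le_card U p01 g_nonempty) _.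
  by move: mp_le; rewrite natrM -mulrA; lra.
apply: le_trans (esun_count_tail M U g i (c := 3 / 2) (Q := fun k => (K <= k)%N) _ _) _.
- lra.
- by move=> k; apply: ler_weXn2l; lra.
rewrite -/p -/q rounds; apply: (exprM_div_le (a := 33 / 32)); first lra.
  by apply/andP; lra.
by rewrite !exprS expr0; lra.
Qed.

End CountTails.

Lemma esun_x_bounds (R : realType) (alpha beta noise P eps : R) n lN d0
    (pos : 'I_n -> R * R) (s : 'I_n) (w : esun_exec n lN (12 * d0 * lN)) m (i0 : 'I_lN) :
  (0 < m)%N -> (m <= 2 ^ i0.+1)%N ->
  (d0 * lN <= esun_count alpha beta noise P eps pos s w i0)%N ->
  (forall i : 'I_lN, (16 * m < 2 ^ i.+1)%N ->
     (esun_count alpha beta noise P eps pos s w i < d0 * lN)%N) ->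
  (m <= esun_x alpha beta noise P eps (1 / 3) pos s w <= 16 * m)%N.
Proof.
move=> m_gt0 m_le count_i0 count_large; rewrite /esun_x /esun_k.
have -> : ((12 * d0 * lN)%:R / 8 * (1 - 1 / 3) : R) = (d0 * lN)%:R.
  by rewrite -mulnA natrM; field.
apply/andP; split.
  apply: (leq_trans m_le); rewrite leq_exp2l //.
  by apply: (leq_bigmax_cond (F := fun i : 'I_lN => i.+1)); rewrite ler_nat.
apply: (big_ind (fun k => 2 ^ k <= 16 * m)%N) => [|k k' |i].
- by rewrite expn0; lia.
- by rewrite /maxn; case: ifP.
- rewrite ler_nat leqNgt => count_ge; apply: contraNT count_ge.
  by rewrite -ltnNge => /count_large.
Qed.

Lemma dist_sym (R : realType) (a b : R * R) : dist a b = dist b a.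
Proof. by rewrite /dist; congr Num.sqrt; ring. Qed.

Lemma dist_gt0 (R : realType) (a b : R * R) : a != b -> 0 < dist a b.
Proof.
move=> ab; rewrite /dist sqrtr_gt0 lt_def addr_ge0 ?sqr_ge0 // andbT.
apply: contra ab; rewrite paddr_eq0 ?sqr_ge0 // !sqrf_eq0 !subr_eq0.
by case: a b => [a1 a2] [b1 b2] /andP[/eqP /= -> /eqP ->].
Qed.

Section Esun.
Variables (R : realType) (alpha beta noise P eps : R).
Hypotheses (alpha_gt0 : 0 < alpha) (noise_gt0 : 0 < noise) (P_gt0 : 0 < P)
  (beta_gt0 : 0 < beta) (eps_ge0 : 0 <= eps).
Variables (n : nat) (pos : 'I_n -> R * R) (s : 'I_n).
Hypothesis pos_inj : injective pos.

Lemma receives_some_set1 v :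
  adjacent alpha beta noise P eps pos s v ->
  receives_some alpha beta noise P eps pos [set v] s.
Proof.
case/andP => sv dist_le; apply/existsP; exists v.
rewrite /sinr_receives set11 !inE sv dist_sym dist_le /=.
rewrite big1 ?addr0 => [|u /andP[/set1P -> ]]; last by rewrite eqxx.
set D := dist (pos s) (pos v); set X := P / (noise * beta).
have D_gt0 : 0 < D by apply: dist_gt0; apply: contra sv => /eqP /pos_inj ->.
have X_gt0 : 0 < X by rewrite divr_gt0 // mulr_gt0.
have r_pow : srange alpha beta noise P `^ alpha = X.
  by rewrite /srange -powRrM mulVf ?powRr1 ?ltW ?gt_eqF.
have DX : D `^ alpha <= X.
  rewrite -r_pow; apply: ge0_ler_powR; rewrite ?nnegrE ?powR_ge0 ?(ltW alpha_gt0) ?(ltW D_gt0) //.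
  by apply: le_trans dist_le _; rewrite ler_piMl ?powR_ge0 // lerBlDr lerDl.
have Da_gt0 : 0 < D `^ alpha by apply: powR_gt0.
rewrite powRN -mulrA -invfM ler_pdivlMr ?mulr_gt0 // mulrC.
by move: DX; rewrite /X ler_pdivlMr ?mulr_gt0 // mulrA.
Qed.

Variables (lN d0 : nat) (U : {set 'I_n}).
Hypotheses (n_le : (n <= 2 ^ lN)%N) (U_neq0 : U != set0)
  (U_adj : forall u, u \in U -> adjacent alpha beta noise P eps pos s u).

Lemma esun_failure_le :
  \sum_(w : esun_exec n lN (12 * d0 * lN) |
          ~~ (#|U| <= esun_x alpha beta noise P eps (1 / 3) pos s w <= 16 * #|U|)%N)
    esun_weight R U w <= lN.+1%:R * (97 / 100) ^+ (d0 * lN).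
Proof.
pose g T := receives_some alpha beta noise P eps pos T s.
have g_nonempty T : g T -> T != set0.
  by case/existsP => v /and4P[vT _ _ _]; apply/set0Pn; exists v.
have g_set1 v : v \in U -> g [set v] by move/U_adj/receives_some_set1.
have [u uU] := set0Pn _ U_neq0.
have m_gt0 : (0 < #|U|)%N by rewrite card_gt0.
have m_le : (#|U| <= 2 ^ lN)%N by rewrite (leq_trans (max_card _)) ?card_ord.
have n_gt1 : (1 < n)%N.
  by rewrite -[n]card_ord; apply/card_gt1P; exists s, u; case/andP: (U_adj uU).
have lN_gt0 : (0 < lN)%N by move: n_le; case: lN => // n_le1; lia.
have [i0 /andP[m_le_i0 i0_le]] := exists_pow2_bracket m_gt0 m_le lN_gt0.
set K := (d0 * lN)%N; have rounds : (12 * d0 * lN = 12 * K)%N by rewrite mulnA.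
pose Q (o : option 'I_lN) (w : esun_exec n lN (12 * d0 * lN)) :=
  if o is Some i then (16 * #|U| < 2 ^ i.+1)%N && (K <= exec_count g w i)%N
  else (exec_count g w i0 < K)%N.
apply: (le_trans (sum_union_bound (Q := Q) (esun_weight_ge0 R U) _)).
  move=> w bad; case: (ltnP (exec_count g w i0) K) => [lo | hi]; first by exists None.
  case: (pickP (fun i => Q (Some i) w)) => [i Qi | none]; first by exists (Some i).
  case/negP: bad; apply: esun_x_bounds m_gt0 m_le_i0 hi _ => i lt_2i.
  by rewrite ltnNge; apply/negP => hi_i; move: (none i); rewrite /Q lt_2i hi_i.
apply: (@le_trans _ _ (\sum_(o : option 'I_lN) (97 / 100 : R) ^+ K)); last first.
  by rewrite sumr_const card_option card_ord [X in _ <= X]mulr_natl.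
apply: ler_sum => -[i|] _ /=; last first.
  by apply: (count_lt_tail R rounds g_nonempty g_set1); rewrite m_le_i0.
case: (ltnP (16 * #|U|) (2 ^ i.+1)) => [lt_2i | _].
  exact: (count_ge_tail R rounds g_nonempty lt_2i).
by rewrite big_pred0 // exprn_ge0 // divr_ge0.
Qed.

End Esun.

Unset Implicit Arguments.

Theorem lemma1 (R : realType) (alpha noise beta P eps : R)
  (Halpha : 2 < alpha) (Hnoise : 0 < noise) (HP : 0 < P) (Hbeta : 1 <= beta)
  (Heps0 : 0 < eps) (Heps1 : eps < 1)
  (d'' : R) (Hd'' : 1 <= d'') :
  exists (d : nat) (eps' : R), (0 < d)%N /\ 0 < eps' < 1 /\
  forall (n lN : nat) (pos : 'I_n -> R * R) (s : 'I_n) (U : {set 'I_n}),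
    injective pos ->
    (n <= 2 ^ lN)%N ->
    U != set0 ->
    (forall u, u \in U -> adjacent alpha beta noise P eps pos s u) ->
    1 - (n%:R : R) `^ (- d'') <=
      \sum_(w : esun_exec n lN (d * lN) |
              (#|U| <= esun_x alpha beta noise P eps eps' pos s w <= 16 * #|U|)%N)
        esun_weight R U w.
Proof.
have a01 : 0 < (97 / 100 : R) < 1 by apply/andP; split; lra.
have [d0 [d0_gt0 d0_small]] := exists_expr_mul_le1 (2 * 2 `^ d'') a01.
exists (12 * d0)%N, (1 / 3); split; first by rewrite muln_gt0.
split; first by apply/andP; split; lra.
move=> n lN pos s U pos_inj n_le U_neq0 U_adj.
have alpha_gt0 : 0 < alpha by lra.
have beta_gt0 : 0 < beta by lra.
have failure := esun_failure_le alpha_gt0 Hnoise HP beta_gt0 (ltW Heps0) pos_inj d0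
  n_le U_neq0 U_adj.
have n_gt0 : (0 < n)%N := leq_ltn_trans (leq0n s) (ltn_ord s).
have a_ge0 : 0 <= 97 / 100 :> R by lra.
have small := natrS_mul_exprM_le_powRN a_ge0 (le_trans ler01 Hd'') n_gt0 n_le d0_small.
have total := sum_esun_weight R lN (12 * d0 * lN) U.
rewrite (bigID (fun w => #|U| <= esun_x alpha beta noise P eps (1 / 3) pos s w <= 16 * #|U|)%N)
  /= in total.
lra.
Qed.
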